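(* Let $k,\delta,p$ be positive integers with $p<\delta$, and let $\epsilon>0$ be a real number such that $$\gamma_e:=(1-\epsilon)\frac{\binom{\delta}{p}}{\binom{\delta-p+e}{e}}>1\qquad\text{for all } e\in\{0,1,\dots,p-1\}.$$ Define $\gamma_p:=1$, $A:=\lceil\binom{\delta}{p}/\epsilon\rceil$, and for integers $k,t$ $$\mathcal S_{(k,t,p)}:=\Big\{(k_0,\dots,k_p)\in\mathbb N_0^{p+1}:\ \sum_{i=0}^p k_i=k,\ \sum_{i=0}^p i\,k_i\le t+p\Big\}.$$ Then for all non-negative integers $t$ and $k$ with $\delta k\ge t$, $$M(A+\delta k,t)\ \ge\ \Big\lfloor A\min_{(k_0,\dots,k_p)\in\mathcal S_{(k,t,p)}}\prod_{e=0}^p\gamma_e^{k_e}\Big\rfloor,$$ and in particular $$M(A+\delta k,t)\ \ge\ A\,\frac{(1-\epsilon)^k\binom{\delta}{p}^k}{\binom{\delta k-pk+t+p}{t+p}}-1.$$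
   Context: Binary Z-channel with noiseless feedback: an input $0$ is always received as $0$; an input $1$ is received as $1$ or (an error) as $0$. A feedback encoding strategy of blocklength $n$ for a finite message set $\mathcal M$ consists of functions $c_i:\mathcal M\times\{0,1\}^{i-1}\to\{0,1\}$, $i=1,\dots,n$; when sending $m$, the $i$-th transmitted symbol is $c_i(m,y^{i-1})$, with $y^{i-1}$ the previously received symbols. Let $c(m,y^{n-1})=(c_1(m),\dots,c_n(m,y^{n-1}))$ and $\mathcal Y^n_t(m)=\{y^n\in\{0,1\}^n:y_i\le c_i(m,y^{i-1})\ \forall i,\ d_H(y^n,c(m,y^{n-1}))\le t\}$ ($d_H$ Hamming distance). The strategy is successful if the sets $\mathcal Y^n_t(m)$, $m\in\mathcal M$, are pairwise disjoint. $M(n,t)$ denotes the maximum $|\mathcal M|$ admitting a successful strategy of blocklength $n$ with at most $t$ errors. $\mathbb N_0$ denotes the non-negative integers. *)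

From HB Require Import structures.
From mathcomp Require Import all_boot all_order all_algebra.
From mathcomp Require Import boolp reals.
Unset Printing Implicit Defensive.
Import Order.TTheory GRing.Theory Num.Theory.

(* A feedback strategy for message set Msg: the i-th (0-based) transmitted
   symbol for message m is  c i m y  where y is the sequence of the i
   previously received symbols. *)
Definition strategy (Msg : finType) := nat -> Msg -> seq bool -> bool.

Definition codeword (Msg : finType) (n : nat) (c : strategy Msg) (m : Msg)
  (y : seq bool) : seq bool :=
  [seq c i m (take i y) | i <- iota 0 n].
Arguments codeword {Msg} n c m y.

Definition hamming (n : nat) (u v : seq bool) : nat :=
  \sum_(i < n) (nth false u i != nth false v i).

Definition outputs (Msg : finType) (n t : nat) (c : strategy Msg) (m : Msg) :
  pred (n.-tuple bool) :=
  fun y => [forall i : 'I_n, (tnth y i <= c i m (take i y))%N]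
           && (hamming n y (codeword n c m y) <= t)%N.
Arguments outputs {Msg} n t c m.

Definition successful (Msg : finType) (n t : nat) (c : strategy Msg) : Prop :=
  forall m1 m2 : Msg, m1 != m2 ->
    [disjoint outputs n t c m1 & outputs n t c m2].
Arguments successful {Msg} n t c.

Definition admits (n t m : nat) : Prop :=
  exists c : strategy 'I_m, successful n t c.

(* M(n,t): the maximum m admitting a successful strategy.  Any such m is
   at most 2^n (the sets Y_t(m) are nonempty and disjoint), so the max
   over m <= 2^n is the true maximum. *)
Definition Mzf (n t : nat) : nat :=
  \max_(m < (2 ^ n).+1 | `[< admits n t m >]) m.

Local Open Scope ring_scope.

Definition gamma (R : realType) (delta p : nat) (eps : R) (e : nat) : R :=
  if (e < p)%N then (1 - eps) * ('C(delta, p))%:R / ('C(delta - p + e, e))%:R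
  else 1.
Arguments gamma {R} delta p eps e.

Definition Sktp (k t p : nat) (kk : {ffun 'I_p.+1 -> 'I_k.+1}) : bool :=
  ((\sum_(i < p.+1) (kk i : nat)) == k)%N
            && (\sum_(i < p.+1) (i * kk i) <= t + p)%N.

Definition gprod (R : realType) (delta p : nat) (eps : R) (k : nat)
  (kk : {ffun 'I_p.+1 -> 'I_k.+1}) : R :=
  \prod_(e < p.+1) gamma delta p eps e ^+ (kk e : nat).
Arguments gprod {R} delta p eps k kk.

(* minimum over S_(k,t,p); the neutral element gamma_0^k is the value at
   (k,0,...,0), which belongs to S_(k,t,p), so this is the true minimum *)
Definition minS (R : realType) (delta p : nat) (eps : R) (k t : nat) : R :=
  \big[Num.min/gamma delta p eps 0 ^+ k]_(kk | Sktp k t p kk)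
     gprod delta p eps k kk.
Arguments minS {R} delta p eps k t.

(* The strategy of blocklength A + delta k is built by induction on k.  Its
   first delta symbols send, for message i, the indicator word of the
   (i mod C(delta,p))-th p-subset of {0,...,delta-1}.  A 1 can only turn into
   a 0, so a received block whose support Y has p - e elements reveals that
   exactly e errors occurred, and leaves at most C(delta-p+e, e) (N/C(delta,p) + 1)
   candidate messages.  By the choice of A and of gamma_e these fit into a
   strategy of blocklength A + delta (k-1) for t - e errors as soon as
   N <= A gamma_e minS(k-1, t-e).  When p k <= t + p, the composition
   (0,...,0,k) shows A minS(k,t) <= A, and sending 1 while fewer than m ones
   have been received already separates n - t + 1 messages.  The closed form
   follows from prod_e C(delta-p+e, e)^(k_e) <= C(delta k - p k + t + p, t + p),
   a consequence of Vandermonde's identity. *)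

From HB Require Import structures.
From mathcomp Require Import all_boot all_order all_algebra.
From mathcomp Require Import boolp reals.
From mathcomp Require Import zify lra.
Import Order.TTheory GRing.Theory Num.Theory.

Section Strategies.
Context {Msg : finType}.
Implicit Types (c : strategy Msg) (P : pred Msg).

Lemma outputsE n t c m (y : n.-tuple bool) :
  outputs n t c m y = [forall i : 'I_n, nth false y i <= c i m (take i y)]
     && (\sum_(i < n) (nth false y i != c i m (take i y)) <= t).
Proof.
rewrite /outputs /hamming; congr (_ && _).
  by apply: eq_forallb => i; rewrite (tnth_nth false).
congr (_ <= _); apply: eq_bigr => i _.
by rewrite /codeword (nth_map 0) ?size_iota // nth_iota.
Qed.

Definition successful_on n t c P :=
  forall m1 m2, P m1 -> P m2 -> m1 != m2 -> forall y : n.-tuple bool,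
    outputs n t c m1 y -> outputs n t c m2 y -> False.

Lemma successful_onT {n t c} : successful n t c <-> successful_on n t c predT.
Proof.
split=> [c_ok m1 m2 _ _ m12 y o1 o2 | c_ok m1 m2 m12].
  by have /pred0P/(_ y)/negbT/negP := c_ok _ _ m12; apply; apply/andP.
apply/pred0P => y /=; apply/negbTE/negP => /andP[o1 o2].
exact: (c_ok m1 m2 isT isT m12 y).
Qed.

Fixpoint noiseless_output c m i : seq bool :=
  if i is j.+1 then rcons (noiseless_output c m j) (c j m (noiseless_output c m j))
  else [::].

Lemma size_noiseless_output c m i : size (noiseless_output c m i) = i.
Proof. by elim: i => //= i IH; rewrite size_rcons IH. Qed.

Lemma take_noiseless_output c m i j :
  i <= j -> take i (noiseless_output c m j) = noiseless_output c m i.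
Proof.
elim: j => [|j IH]; first by rewrite leqn0 => /eqP->.
rewrite leq_eqVlt => /orP[/eqP->|].
  by rewrite take_oversize ?size_noiseless_output.
by rewrite ltnS => le_ij /=; rewrite -cats1 takel_cat ?size_noiseless_output ?IH.
Qed.

Lemma nth_noiseless_output c m i j :
  i < j -> nth false (noiseless_output c m j) i = c i m (noiseless_output c m i).
Proof.
elim: j => [//|j IH]; rewrite ltnS leq_eqVlt /= nth_rcons size_noiseless_output.
by case/orP=> [/eqP->|lt_ij]; rewrite ?ltnn ?eqxx // lt_ij IH.
Qed.

Lemma noiseless_output_in_outputs n t c m (sz : size (noiseless_output c m n) == n) :
  outputs n t c m (Tuple sz).
Proof.
have clean_i (i : 'I_n) : nth false (Tuple sz) i = c i m (take i (Tuple sz)).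
  by rewrite /= nth_noiseless_output // take_noiseless_output // ltnW.
rewrite outputsE; apply/andP; split; first by apply/forallP => i; rewrite clean_i.
by rewrite big1 // => i _; rewrite clean_i eqxx.
Qed.

Definition below d (u v : seq bool) : bool :=
  [forall i : 'I_d, nth false u i <= nth false v i].

Definition append_strategy d (w : Msg -> seq bool)
    (next : seq bool -> strategy Msg) : strategy Msg :=
  fun i m y => if i < d then nth false (w m) i
               else next (take d y) (i - d) m (drop d y).

Lemma outputs_append d n t w next m (y : (d + n).-tuple bool) :
  outputs (d + n) t (append_strategy d w next) m y ->
  [/\ below d (take d y) (w m), hamming d (take d y) (w m) <= t &
      outputs n (t - hamming d (take d y) (w m)) (next (take d y)) m
        (tcast (addKn d n) [tuple of drop d y])].
Proof.
have headE (i : 'I_d) : append_strategy d w next (lshift n i) m (take i y)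
    = nth false (w m) i by rewrite /append_strategy /= ltn_ord.
have tailE (j : 'I_n) : append_strategy d w next (rshift d j) m (take (d + j) y)
    = next (take d y) j m (take j (drop d y)).
  rewrite /append_strategy /= ltnNge leq_addr /= addKn.
  by rewrite take_takel ?leq_addr // take_drop [j + d]addnC.
rewrite !outputsE big_split_ord /= => /andP[/forallP dom errs].
have h1E : hamming d (take d y) (w m) = \sum_(i < d)
    (nth false y (lshift n i) != append_strategy d w next (lshift n i) m (take i y)).
  by apply: eq_bigr => i _; rewrite headE nth_take.
split.
- by apply/forallP => i; have := dom (lshift n i); rewrite headE /= nth_take.
- by rewrite h1E (leq_trans (leq_addr _ _) errs).
rewrite val_tcast /= leq_subRL ?h1E ?(leq_trans (leq_addr _ _) errs) //.
apply/andP; split.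
  by apply/forallP => j; have := dom (rshift d j); rewrite tailE nth_drop.
apply: leq_trans errs; rewrite leq_add2l leq_eqVlt; apply/orP; left.
by apply/eqP/eq_bigr => j _; rewrite -tailE nth_drop.
Qed.

Lemma append_successful {d n t w next} (e : seq bool -> nat) :
  (forall y1 m, below d y1 (w m) -> hamming d y1 (w m) = e y1) ->
  (forall y1, e y1 <= t ->
     successful_on n (t - e y1) (next y1) (fun m => below d y1 (w m))) ->
  successful (d + n) t (append_strategy d w next).
Proof.
move=> eE c_ok; apply/successful_onT => m1 m2 _ _ m12 y.
case/outputs_append => b1 h1 o1 /outputs_append[b2 _ o2].
rewrite eE // in h1 o1; rewrite eE // in o2.
exact: (c_ok _ h1 m1 m2 b1 b2 m12 _ o1 o2).
Qed.

End Strategies.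

Lemma admits_successful_on {n t N} {Msg : finType} {P : pred Msg} :
  admits n t N -> #|P| <= N -> exists c, successful_on n t c P.
Proof.
case=> c0 c0_ok leP; have {}c0_ok := iffLR successful_onT c0_ok.
pose idx m := index m (enum P).
have idx_lt m : P m -> idx m < N.
  by move=> Pm; apply: leq_trans leP; rewrite cardE index_mem mem_enum.
case: N c0 c0_ok leP idx_lt => [|N] c0 c0_ok _ idx_lt.
  by exists (fun _ _ _ => false) => m1 m2 /idx_lt.
exists (fun i m => c0 i (inord (idx m))) => m1 m2 P1 P2 m12 y.
apply: (c0_ok _ _ isT isT); apply: contra m12 => /eqP/(congr1 val).
by rewrite /= !inordK ?idx_lt // => /index_inj-> //; rewrite mem_enum.
Qed.

Lemma admits_leq_exp2 {n t N} : admits n t N -> N <= 2 ^ n.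
Proof.
case=> c c_ok; have {}c_ok := iffLR successful_onT c_ok.
pose y m : n.-tuple bool := Tuple (introT eqP (size_noiseless_output c m n)).
suff y_inj : injective y.
  by have := leq_card y y_inj; rewrite card_ord card_tuple card_bool.
move=> m1 m2 y12; apply/eqP/negPn/negP => m12.
apply: (c_ok m1 m2 isT isT m12 (y m1)); first exact: noiseless_output_in_outputs.
rewrite y12; exact: noiseless_output_in_outputs.
Qed.

Lemma leq_Mzf n t N : admits n t N -> N <= Mzf n t.
Proof.
move=> adm; have lt_N : N < (2 ^ n).+1 by rewrite ltnS (admits_leq_exp2 adm).
exact: (@leq_bigmax_cond _ (fun m : 'I_(2 ^ n).+1 => `[< admits n t m >])
          (fun m => nat_of_ord m) (Ordinal lt_N) (asboolT adm)).
Qed.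

Definition count_strategy (N : nat) : strategy 'I_N :=
  fun _ m y => \sum_(j < size y) nth false y j < m.

Lemma count_strategy_weight {n t N} {m : 'I_N} {y : n.-tuple bool} :
  m <= n - t -> outputs n t (count_strategy N) m y ->
  \sum_(j < n) nth false y j = m.
Proof.
rewrite outputsE => m_le /andP[/forallP dom errs].
pose s i := \sum_(j < i) nth false y j.
have sentE (i : 'I_n) : count_strategy N i m (take i y) = (s i < m).
  rewrite /count_strategy size_takel; last by rewrite size_tuple ltnW.
  by congr (_ < _); apply: eq_bigr => j _; rewrite nth_take.
have sS i : s i.+1 = s i + nth false y i by rewrite /s big_ord_recr.
have s_mono : {homo s : i j / i <= j}.
  by apply: (@homo_leq _ s) => // [i j k|i]; [exact: leq_trans | rewrite sS leq_addr].
have s_le i : i <= n -> s i <= m.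
  elim: i => [|i IH] lt_in; first by rewrite /s big_ord0.
  have := dom (Ordinal lt_in); rewrite sentE sS /=.
  by case: (nth false y i); case: ltnP => //= *; rewrite ?addn1 ?addn0 // IH // ltnW.
(* A 1 is received only where a 1 was sent, so errors plus weight count the
   rounds in which a 1 was sent. *)
have errs_weight : \sum_(i < n) (nth false y i != (s i < m)) + s n
                   = \sum_(i < n) (s i < m).
  rewrite /s -big_split /=; apply: eq_bigr => i _; have := dom i.
  by rewrite sentE; case: (nth false y i); case: (_ < m).
apply/eqP; rewrite -/(s n) eqn_leq s_le // andTb leqNgt; apply/negP => lt_sn.
have all_sent : \sum_(i < n) (s i < m) = n.
  rewrite -[RHS]card_ord -sum1_card; apply: eq_bigr => i _.
  by rewrite (leq_ltn_trans (s_mono _ _ (ltnW (ltn_ord i)))).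
have errsE : \sum_(i < n) (nth false y i != count_strategy N i m (take i y))
             = \sum_(i < n) (nth false y i != (s i < m)).
  by apply: eq_bigr => i _; rewrite sentE.
by move: errs errs_weight; rewrite errsE all_sent; lia.
Qed.

Lemma count_strategy_admits n t N : N <= (n - t).+1 -> admits n t N.
Proof.
move=> le_N; exists (count_strategy N); apply/successful_onT.
move=> m1 m2 _ _ m12 y o1 o2.
have m_le (m : 'I_N) : m <= n - t by rewrite -ltnS (leq_trans _ le_N).
move: m12; rewrite -(inj_eq val_inj) /= -(count_strategy_weight (m_le m1) o1).
by rewrite -(count_strategy_weight (m_le m2) o2) eqxx.
Qed.

Section WordsOfSets.
Variable d : nat.
Implicit Types (s B Y : {set 'I_d}) (y : seq bool).

Definition word_of_set s : seq bool := [seq j \in s | j <- enum 'I_d].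

Definition set_of_word y : {set 'I_d} := [set j : 'I_d | nth false y j].

Lemma nth_word_of_set s (j : 'I_d) : nth false (word_of_set s) j = (j \in s).
Proof. by rewrite (nth_map j) ?size_enum_ord // nth_ord_enum. Qed.

Lemma below_word_of_set y s :
  below d y (word_of_set s) = (set_of_word y \subset s).
Proof.
apply/forallP/subsetP => [dom j | sub j].
  rewrite inE => yj; have := dom j.
  by rewrite nth_word_of_set yj; case: (j \in s).
rewrite nth_word_of_set; case: (boolP (nth false y j)) => // yj.
by rewrite sub // inE.
Qed.

Lemma hamming_word_of_set y s : set_of_word y \subset s ->
  hamming d y (word_of_set s) = #|s| - #|set_of_word y|.
Proof.
move=> sub; rewrite -(setIidPr sub) -cardsD -sum1_card big_mkcond /=.
apply: eq_bigr => j _; rewrite nth_word_of_set !inE.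
have := subsetP sub j; rewrite inE.
by case: (nth _ _ _); case: (j \in s) => // /(_ isT).
Qed.

Lemma card_supsets Y p : #|Y| <= p ->
  #|[set s : {set 'I_d} | (#|s| == p) && (Y \subset s)]| = 'C(d - #|Y|, p - #|Y|).
Proof.
move=> le_Yp; pose D := [set B : {set 'I_d} | B \subset ~: Y & #|B| == p - #|Y|].
have disjDY B : B \in D -> [disjoint B & Y].
  by rewrite inE disjoints_subset => /andP[].
have -> : [set s : {set 'I_d} | (#|s| == p) && (Y \subset s)]
          = [set B :|: Y | B in D].
  apply/setP => s; rewrite inE.
  apply/andP/imsetP => [[/eqP card_s sYs]|[B DB ->]].
    exists (s :\: Y); last by rewrite setUC -{1}(setID s Y) (setIidPr sYs).
    by rewrite inE cardsD (setIidPr sYs) card_s eqxx andbT setDE subsetIr.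
  split; last exact: subsetUr.
  have /disjoint_setI0 BY0 := disjDY B DB.
  move: DB; rewrite inE => /andP[_ /eqP card_B].
  by rewrite cardsU BY0 cards0 subn0 card_B subnK.
rewrite card_in_imset => [|B1 B2 DB1 DB2 /(congr1 (fun B => B :\: Y))];
  last first.
  by rewrite !setDUl setDv !setU0 !(setDidPl (disjDY _ _)).
by rewrite cards_draws (cardsCs (~: Y)) setCK card_ord.
Qed.

Definition psubset p (i : nat) : {set 'I_d} :=
  nth set0 (enum [set s : {set 'I_d} | #|s| == p]) (i %% 'C(d, p)).

Lemma card_psubset p i : p <= d -> #|psubset p i| = p.
Proof.
move=> le_pd; have C_gt0 : 0 < 'C(d, p) by rewrite bin_gt0.
have : psubset p i \in enum [set s : {set 'I_d} | #|s| == p].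
  by rewrite mem_nth // -cardE card_draws card_ord ltn_mod.
by rewrite mem_enum inE => /eqP.
Qed.

Lemma card_psubset_supsets p N Y : p <= d -> #|Y| <= p ->
  #|[set i : 'I_N | Y \subset psubset p i]| * 'C(d, p)
    <= 'C(d - #|Y|, p - #|Y|) * (N + 'C(d, p)).
Proof.
move=> le_pd le_Yp; set C := 'C(d, p); have C_gt0 : 0 < C by rewrite bin_gt0.
pose f (i : 'I_N) := (psubset p i, inord (i %/ C) : 'I_(N %/ C).+1).
have f_inj : injective f.
  have div_lt (k : 'I_N) : k %/ C < (N %/ C).+1 by rewrite ltnS leq_div2r // ltnW.
  move=> i j [eq_ps /(congr1 val)]; rewrite /= !inordK // => eq_div.
  have eq_mod : i %% C = j %% C.
    have ltC k : k %% C < size (enum [set s : {set 'I_d} | #|s| == p]).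
      by rewrite -cardE card_draws card_ord ltn_mod.
    apply/eqP; rewrite -(nth_uniq set0 (ltC i) (ltC j) (enum_uniq _)).
    exact/eqP.
  by apply: val_inj; rewrite /= (divn_eq i C) (divn_eq j C) eq_div eq_mod.
have card_le : #|[set i : 'I_N | Y \subset psubset p i]|
               <= 'C(d - #|Y|, p - #|Y|) * (N %/ C).+1.
  rewrite -(card_imset _ f_inj) -card_supsets // -[X in _ * X]card_ord -cardsT.
  rewrite -cardsX; apply/subset_leq_card/subsetP => _ /imsetP[i + ->].
  by rewrite !inE card_psubset // eqxx /= andbT.
apply: leq_trans (leq_mul card_le (leqnn C)) _.
by rewrite -mulnA leq_mul2l mulSn addnC leq_add2r leq_divM orbT.
Qed.
End WordsOfSets.

Lemma leq_mul_bin a1 b1 a2 b2 :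
  'C(a1 + b1, b1) * 'C(a2 + b2, b2) <= 'C(a1 + a2 + (b1 + b2), b1 + b2).
Proof.
rewrite addnACA -(binomial.Vandermonde (a1 + b1) (a2 + b2)).
have lt_b1 : b1 < (b1 + b2).+1 by rewrite ltnS leq_addr.
by rewrite (bigD1 (Ordinal lt_b1)) //= addKn leq_addr.
Qed.

Lemma leq_bin_diag a b b' : b <= b' -> 'C(a + b, b) <= 'C(a + b', b').
Proof.
move=> le_bb'; rewrite -(subnKC le_bb').
elim: (b' - b) => [|n IH]; first by rewrite addn0.
by apply: leq_trans IH _; rewrite !addnS binS leq_addl.
Qed.

Lemma leq_expn_bin a b f : 'C(a + b, b) ^ f <= 'C(a * f + b * f, b * f).
Proof.
elim: f => [|f IH]; first by rewrite !muln0 bin0.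
rewrite expnS !mulnS.
exact: leq_trans (leq_mul (leqnn _) IH) (leq_mul_bin _ _ _ _).
Qed.

Lemma leq_prod_bin {I : Type} (r : seq I) a (f g : I -> nat) :
  \prod_(i <- r) 'C(a + g i, g i) ^ f i <=
  'C(a * \sum_(i <- r) f i + \sum_(i <- r) g i * f i, \sum_(i <- r) g i * f i).
Proof.
elim: r => [|i r IH]; first by rewrite !big_nil muln0 bin0.
rewrite !big_cons mulnDr.
exact: leq_trans (leq_mul (leq_expn_bin a (g i) (f i)) IH) (leq_mul_bin _ _ _ _).
Qed.

Section Compositions.
Context {k p : nat}.
Implicit Types (kk : {ffun 'I_p.+1 -> 'I_k.+1}) (j : 'I_p.+1).

Definition single_comp j : {ffun 'I_p.+1 -> 'I_k.+1} :=
  [ffun i => if i == j then ord_max else ord0].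

Definition incr_comp kk j : {ffun 'I_p.+1 -> 'I_k.+2} :=
  [ffun i => inord (kk i + (i == j))].

Lemma single_compE j i : single_comp j i = (i == j) * k :> nat.
Proof. by rewrite ffunE; case: (i == j); rewrite /= ?mul1n. Qed.

Lemma incr_compE kk j i : incr_comp kk j i = kk i + (i == j) :> nat.
Proof.
by rewrite ffunE inordK //; have := ltn_ord (kk i); case: (i == j) => /=; lia.
Qed.

Lemma Sktp_single t j : j * k <= t + p -> Sktp k t p (single_comp j).
Proof.
move=> le_jk; have others i : i != j -> single_comp j i = 0 :> nat.
  by rewrite single_compE => /negbTE->.
apply/andP; split.
  by rewrite (big_only1 j) ?single_compE ?eqxx ?mul1n // => i /others->.
rewrite (big_only1 j) ?single_compE ?eqxx ?mul1n // => i /others->.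
by rewrite muln0.
Qed.

Lemma Sktp_incr t kk j :
  j <= t -> Sktp k (t - j) p kk -> Sktp k.+1 t p (incr_comp kk j).
Proof.
move=> le_jt /andP[/eqP sum_kk wsum_kk].
have onlyj (F : 'I_p.+1 -> nat) : \sum_i F i * (i == j) = F j.
  by rewrite (big_only1 j) ?eqxx ?muln1 // => i /negbTE->; rewrite muln0.
apply/andP; split.
  rewrite (eq_bigr _ (fun i _ => incr_compE kk j i)) big_split /= sum_kk.
  by rewrite (big_only1 j) ?eqxx ?addn1 // => i /negbTE->.
rewrite (eq_bigr (fun i : 'I_p.+1 => i * kk i + i * (i == j))); last first.
  by move=> i _; rewrite incr_compE mulnDr.
rewrite big_split /= (onlyj (fun i => nat_of_ord i)).
by move: wsum_kk; rewrite -(leq_add2r j) addnAC subnK.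
Qed.

End Compositions.

Lemma leq_prod_bin_Sktp delta p k t kk : Sktp k t p kk ->
  (\prod_(e < p.+1) 'C(delta - p + e, e) ^ kk e
     <= 'C(delta * k - p * k + t + p, t + p))%N.
Proof.
case/andP=> /eqP sum_kk wsum_kk.
have := leq_prod_bin (index_enum 'I_p.+1) (delta - p) (fun e => kk e) val.
move/leq_trans; apply.
by rewrite sum_kk -mulnBl -addnA; apply: leq_bin_diag.
Qed.

Local Open Scope ring_scope.

Section MinS.
Context {R : realType} {delta p : nat} {eps : R}.
Hypothesis gamma_gt1 : forall e, (e < p)%N -> 1 < gamma delta p eps e.

Lemma gamma_ge1 e : 1 <= gamma delta p eps e.
Proof.
by case: (ltnP e p) => [/gamma_gt1/ltW//|le_pe]; rewrite /gamma ltnNge le_pe.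
Qed.

Lemma gprod_single k (j : 'I_p.+1) :
  gprod delta p eps k (single_comp j) = gamma delta p eps j ^+ k.
Proof.
rewrite /gprod (big_only1 j) ?single_compE ?eqxx ?mul1n // => i.
by rewrite single_compE => /negbTE->.
Qed.

Lemma gprod_incr k kk (j : 'I_p.+1) :
  gprod delta p eps k.+1 (incr_comp kk j)
    = gamma delta p eps j * gprod delta p eps k kk.
Proof.
rewrite /gprod (eq_bigr _ (fun i _ => congr1 _ (incr_compE kk j i))).
rewrite (eq_bigr (fun i : 'I_p.+1 =>
  gamma delta p eps i ^+ kk i * gamma delta p eps i ^+ (i == j))) => [|i _]; last first.
  by rewrite exprD.
by rewrite big_split /= mulrC (big_only1 j) ?eqxx ?expr1 // => i /negbTE->.
Qed.

Lemma minS_le {k t kk} :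
  Sktp k t p kk -> minS delta p eps k t <= gprod delta p eps k kk.
Proof. exact: bigmin_le_cond. Qed.

Lemma le_minS k t (x : R) :
  (forall kk, Sktp k t p kk -> x <= gprod delta p eps k kk) ->
  x <= minS delta p eps k t.
Proof.
move=> le_x; apply: le_bigmin => //; rewrite -(gprod_single k ord0).
by apply: le_x; apply: Sktp_single; rewrite mul0n.
Qed.

Lemma minS_le1 k t : (p * k <= t + p)%N -> minS delta p eps k t <= 1.
Proof.
move=> le_pk; have := minS_le (Sktp_single _ ord_max le_pk).
by rewrite gprod_single /gamma ltnn expr1n.
Qed.

Lemma minS_ge1 k t : 1 <= minS delta p eps k t.
Proof.
apply: le_minS => kk _; apply: (big_ind (fun x : R => 1 <= x)) => //.
  exact: mulr_ege1.
by move=> e _; apply/exprn_ege1/gamma_ge1.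
Qed.

Lemma minS_step k t e : (e <= p)%N -> (e <= t)%N ->
  minS delta p eps k.+1 t <= gamma delta p eps e * minS delta p eps k (t - e).
Proof.
move=> le_ep le_et; have gamma_gt0 : 0 < gamma delta p eps e.
  exact: lt_le_trans ltr01 (gamma_ge1 e).
rewrite mulrC -ler_pdivrMr //; apply: le_minS => kk S_kk.
rewrite ler_pdivrMr // mulrC.
have -> : e = Ordinal (le_ep : (e < p.+1)%N) by [].
by rewrite -gprod_incr; apply/minS_le/Sktp_incr.
Qed.

End MinS.

Section Construction.
Context {R : realType} {delta p : nat} {eps : R} {A : nat}.
Hypotheses (p_lt_delta : (p < delta)%N) (eps_gt0 : 0 < eps).
Hypothesis gamma_gt1 : forall e, (e < p)%N -> 1 < gamma delta p eps e.
Hypothesis A_large : ('C(delta, p))%:R <= eps * A%:R.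

Lemma card_survivors_le {k t N} {Y : {set 'I_delta}} :
  (#|Y| <= p)%N -> (p - #|Y| <= t)%N ->
  N%:R <= A%:R * minS delta p eps k.+1 t ->
  #|[set i : 'I_N | Y \subset psubset delta p i]|%:R
    <= A%:R * minS delta p eps k (t - (p - #|Y|)).
Proof.
move=> le_Yp le_et le_N.
set e := (p - #|Y|)%N; set S := [set i | _]; set m := minS _ _ _ k _.
have m_ge1 : 1 <= m := minS_ge1 gamma_gt1 k _.
have {}le_N : N%:R <= A%:R * (gamma delta p eps e * m).
  by apply: le_trans le_N _; rewrite ler_wpM2l ?ler0n ?minS_step // leq_subr.
have [lt_ep|le_pe] := ltnP e p; last first.
  rewrite /gamma ltnNge le_pe mul1r in le_N; apply: le_trans le_N.
  by rewrite ler_nat (leq_trans (max_card _)) ?card_ord.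
set C := 'C(delta, p); set Ce := 'C(delta - p + e, e).
have C_gt0 : (0 < C)%N by rewrite bin_gt0 ltnW.
have Ce_gt0 : (0 < Ce)%N by rewrite bin_gt0 leq_addl.
have count : (#|S| * C <= Ce * (N + C))%N.
  have := card_psubset_supsets _ _ N _ (ltnW p_lt_delta) le_Yp.
  by rewrite (_ : (delta - #|Y| = delta - p + e)%N) //; lia.
have gammaE : gamma delta p eps e = (1 - eps) * C%:R / Ce%:R.
  by rewrite /gamma lt_ep.
have le_Ce : Ce%:R <= C%:R :> R.
  have := gamma_gt1 _ lt_ep; rewrite gammaE ltr_pdivlMr ?ltr0n // mul1r => lt_Ce.
  by apply/ltW/(lt_le_trans lt_Ce)/ler_piMl; rewrite ?ler0n // lerBlDr lerDl ltW.
have le_NCe : N%:R * Ce%:R <= A%:R * (1 - eps) * C%:R * m.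
  rewrite -ler_pdivlMr ?ltr0n //; apply: le_trans le_N _.
  by rewrite gammaE !mulrA mulrAC.
have le_C : C%:R <= eps * A%:R * m.
  by apply: le_trans A_large _; rewrite ler_peMr // mulr_ge0 ?ler0n // ltW.
rewrite -(ler_pM2r (_ : 0 < C%:R)) ?ltr0n //.
apply: le_trans (_ : _ <= Ce%:R * (N%:R + C%:R)) _.
  by rewrite -natrD -!natrM ler_nat.
have C_ge0 : 0 <= C%:R :> R by rewrite ler0n.
(* Ce N <= A (1 - eps) C m by the bound on N, and Ce C <= C C <= eps A m C by
   the choice of A. *)
nra.
Qed.

Lemma admits_of_minS_base k t N : (t <= delta * k)%N -> (p * k <= t + p)%N ->
  N%:R <= A%:R * minS delta p eps k t -> admits (A + delta * k) t N.
Proof.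
move=> le_t le_pk le_N; apply: count_strategy_admits.
suff : (N <= A)%N by lia.
rewrite -(ler_nat R); apply: le_trans le_N _.
by rewrite ler_piMr ?ler0n // minS_le1.
Qed.

Lemma admits_of_minS_step k t N :
  (forall t' N', (t' <= delta * k)%N ->
     N'%:R <= A%:R * minS delta p eps k t' -> admits (A + delta * k) t' N') ->
  (t < p * k)%N -> N%:R <= A%:R * minS delta p eps k.+1 t ->
  admits (A + delta * k.+1) t N.
Proof.
move=> IH lt_t le_N; rewrite mulnS addnCA.
have le_pk : (p * k <= delta * k)%N by rewrite leq_mul2r ltnW ?orbT.
pose w (i : 'I_N) := word_of_set delta (psubset delta p i).
pose e y1 := (p - #|set_of_word delta y1|)%N.
have cont y1 : exists c : strategy 'I_N, (e y1 <= t)%N ->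
    successful_on (A + delta * k) (t - e y1) c (fun i => below delta y1 (w i)).
  have [le_Yp|lt_pY] := leqP #|set_of_word delta y1| p; last first.
    exists (fun _ _ _ => false) => _ m1 m2; rewrite /w below_word_of_set.
    move/subset_leq_card; rewrite (card_psubset _ _ _ (ltnW p_lt_delta)).
    by rewrite leqNgt lt_pY.
  have [le_et|lt_te] := leqP (e y1) t; last first.
    by exists (fun _ _ _ => false) => le_et; move: lt_te; rewrite ltnNge le_et.
  have le_t' : (t - e y1 <= delta * k)%N by lia.
  have card_P : #|(fun i => below delta y1 (w i))|
                = #|[set i : 'I_N | set_of_word delta y1 \subset psubset delta p i]|.
    by apply: eq_card => i; rewrite [in LHS]unfold_in inE /= below_word_of_set.
  have [c c_ok] := admits_successful_on
    (IH _ _ le_t' (card_survivors_le le_Yp le_et le_N)) (eq_leq card_P).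
  by exists c.
case: (choice cont) => c c_ok.
exists (append_strategy delta w c); apply: (append_successful e) => //.
move=> y1 i; rewrite /w below_word_of_set => sub.
by rewrite hamming_word_of_set // (card_psubset _ _ _ (ltnW p_lt_delta)).
Qed.

Lemma admits_of_minS k t N : (t <= delta * k)%N ->
  N%:R <= A%:R * minS delta p eps k t -> admits (A + delta * k) t N.
Proof.
elim: k t N => [|k IH] t N le_t le_N.
  by apply: admits_of_minS_base => //; rewrite muln0.
have [le_pk|lt_t] := leqP (p * k.+1) (t + p); first exact: admits_of_minS_base.
by apply: admits_of_minS_step => //; rewrite mulnS addnC ltn_add2l in lt_t.
Qed.

End Construction.

Section ClosedForm.
Context {R : realType} {delta p : nat} {eps : R}.
Hypotheses (p_gt0 : (0 < p)%N) (p_lt_delta : (p < delta)%N) (eps_gt0 : 0 < eps).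
Hypothesis gamma_gt1 : forall e, (e < p)%N -> 1 < gamma delta p eps e.

Lemma gamma_ge_ratio e : (e <= p)%N ->
  (1 - eps) * ('C(delta, p))%:R / ('C(delta - p + e, e))%:R <= gamma delta p eps e.
Proof.
rewrite leq_eqVlt => /orP[/eqP->|lt_ep]; last by rewrite /gamma lt_ep.
rewrite /gamma ltnn subnK ?(ltnW p_lt_delta) // mulfK.
  by rewrite lerBlDr lerDl ltW.
by rewrite pnatr_eq0 -lt0n bin_gt0 ltnW.
Qed.

Lemma closed_form_le_minS k t :
  (1 - eps) ^+ k * ('C(delta, p))%:R ^+ k
    / ('C(delta * k - p * k + t + p, t + p))%:R <= minS delta p eps k t.
Proof.
set C := 'C(delta, p); set B := 'C(_, _); set q := (1 - eps) * C%:R.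
have B_gt0 : (0 < B)%N by rewrite bin_gt0 -addnA leq_addl.
have q_ge0 : 0 <= q.
  have := gamma_gt1 _ p_gt0; rewrite /gamma p_gt0 addn0 bin0 divr1 => /ltW.
  exact/le_trans/ler01.
rewrite -exprMn -/q; apply: le_minS => kk S_kk.
pose P := (\prod_(e < p.+1) 'C(delta - p + e, e) ^ kk e)%N.
have P_gt0 : (0 < P)%N.
  by rewrite prodn_gt0 // => e; rewrite expn_gt0 bin_gt0 leq_addl.
apply: le_trans (_ : _ <= q ^+ k / P%:R) _.
  rewrite ler_wpM2l ?exprn_ge0 // lef_pV2 ?posrE ?ltr0n // ler_nat.
  exact: leq_prod_bin_Sktp.
have <- : \prod_(e < p.+1) (q / ('C(delta - p + e, e))%:R) ^+ kk e = q ^+ k / P%:R.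
  rewrite (eq_bigr (fun e : 'I_p.+1 => q ^+ kk e / ('C(delta - p + e, e) ^ kk e)%:R)).
    by rewrite prodf_div prodrXr natr_prod; case/andP: S_kk => /eqP->.
  by move=> e _; rewrite expr_div_n natrX.
apply: ler_prod => e _; rewrite exprn_ge0 ?divr_ge0 ?ler0n //=.
apply: lerXn2r; rewrite ?nnegrE ?divr_ge0 ?ler0n //.
  exact: le_trans ler01 (gamma_ge1 gamma_gt1 e).
exact: gamma_ge_ratio (leq_ord e).
Qed.

End ClosedForm.

Theorem lemma2 (R : realType) (delta p : nat) (eps : R) :
  (0 < p)%N -> (p < delta)%N -> 0 < eps ->
  (forall e : nat, (e < p)%N -> 1 < gamma delta p eps e) ->
  let A : nat := `| Num.ceil (('C(delta, p))%:R / eps) |%N in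
  forall t k : nat, (t <= delta * k)%N ->
    Num.floor (A%:R * minS delta p eps k t) <= (Mzf (A + delta * k) t)%:Z
    /\ A%:R * ((1 - eps) ^+ k * ('C(delta, p))%:R ^+ k
               / ('C(delta * k - p * k + t + p, t + p))%:R) - 1
       <= (Mzf (A + delta * k) t)%:R.
Proof.
move=> p_gt0 p_lt_delta eps_gt0 gamma_gt1 A t k le_t.
set M := Mzf _ t; set x := A%:R * minS delta p eps k t.
have A_large : ('C(delta, p))%:R <= eps * A%:R.
  have ratio_ge0 : 0 <= ('C(delta, p))%:R / eps by rewrite divr_ge0 ?ler0n ?ltW.
  rewrite -ler_pdivrMl // mulrC /A natr_absz ger0_norm ?ceil_ge // ceil_ge0.
  by apply: lt_le_trans ratio_ge0; rewrite ltrN10.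
have x_ge0 : 0 <= x by rewrite mulr_ge0 ?ler0n // (le_trans ler01) ?minS_ge1.
have le_M : (Num.truncn x <= M)%N.
  apply/leq_Mzf/(admits_of_minS p_lt_delta eps_gt0 gamma_gt1 A_large _ _ _ le_t).
  by rewrite truncn_le.
have lt_x : x < M.+1%:R.
  by apply: lt_le_trans (truncnS_gt x) _; rewrite ler_nat ltnS.
split.
  by rewrite -ltzD1 floor_lt_int (_ : (M%:Z + 1)%:~R = M.+1%:R) // intrD -natr1.
rewrite lerBlDr natr1; apply/ltW/(le_lt_trans _ lt_x).
by rewrite ler_wpM2l ?ler0n ?closed_form_le_minS.
Qed.
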